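(* Let $N(\Theta,\mathbf{X})\in\mathbb{R}^M$ be a neural network with weight vector $\Theta\in\mathbb{R}^n$, evaluated on a fixed training dataset $\mathbf{X}$ of $M$ players, whose $i$-th output $N(\Theta,\mathbf{X})_i=\hat d_i$ is the predicted required difficulty for player $i$. Let $d_1,\dots,d_M\in\mathbb{R}$ be the given (actual) difficulties, $P\in[0,1]$ a desired completion rate and $\delta\ge 0$ a tolerance. Let $\mathcal{M}\subseteq\mathbb{R}^n$ be the set of weights that are local minima of the network's training loss, and let $$\mathcal{C}=\Bigl\{\Theta\in\mathbb{R}^n : \Bigl|\tfrac{1}{M}\textstyle\sum_{i=1}^{M}\mathbb{1}[d_i\ge N(\Theta,\mathbf{X})_i]-P\Bigr|\le\delta\Bigr\},$$ where $\mathbb{1}[\cdot]$ equals $1$ if its argument is true and $0$ otherwise. Assume $\mathcal{M}$ and $\mathcal{C}$ are nonempty and define the projection operators $$\mathcal{P}_{\mathcal{M}}\Theta\in\operatorname{argmin}_{\hat\Theta\in\mathcal{M}}\|\Theta-\hat\Theta\|_2,\qquad \mathcal{P}_{\mathcal{C}}\Theta\in\operatorname{argmin}_{\hat\Theta\in\mathcal{C}}\|\Theta-\hat\Theta\|_2$$ (i.e. each returns a closest point of the respective set, assumed to exist). Starting from an arbitrary initial weight vector $\Theta_1^C$, define for $i\ge1$ the alternating scheme $$\Theta_i^M\leftarrow\mathcal{P}_{\mathcal{M}}\Theta_i^C,\qquad \Theta_{i+1}^C\leftarrow\mathcal{P}_{\mathcal{C}}\Theta_i^M.$$ Then the sequence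 of distances $\|\Theta_i^C-\Theta_i^M\|_2$ converges.
   Context: This is set in a dynamic difficulty adjustment problem: a neural network outputs a required difficulty $\hat d_i$ for each player $i$, trained to minimize a loss (the local minima of which form $\mathcal{M}$), subject to a completion rate constraint requiring that the fraction of players with $d_i\ge\hat d_i$ equal the target $P$ up to tolerance $\delta$ (the set $\mathcal{C}$). $\|\cdot\|_2$ is the Euclidean norm on weight space. *)

From mathcomp Require Import all_boot all_order all_algebra.
From mathcomp Require Import all_classical all_reals all_analysis.
Set Implicit Arguments. Unset Strict Implicit. Unset Printing Implicit Defensive.
Import Order.TTheory GRing.Theory Num.Theory.
Local Open Scope classical_set_scope.
Local Open Scope ring_scope.

Definition norm2 (R : realType) (n : nat) (v : 'rV[R]_n) : R :=
  Num.sqrt (\sum_(j < n) v ord0 j ^+ 2).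

Definition local_minima (R : realType) (n : nat) (L : 'rV[R]_n -> R)
  : set 'rV[R]_n :=
  [set th | exists2 e : R, 0 < e &
     forall th', norm2 (th' - th) < e -> L th <= L th'].

(* The completion-rate constraint set C. N th is the network output
   N(th, X) in R^M (X fixed), d the actual difficulties. *)
Definition completion_set (R : realType) (n M : nat)
  (N : 'rV[R]_n -> 'rV[R]_M) (d : 'rV[R]_M) (P delta : R) : set 'rV[R]_n :=
  [set th | `| (\sum_(i < M) (if N th ord0 i <= d ord0 i then 1 else 0)) / M%:R
               - P | <= delta].

Definition is_projection (R : realType) (n : nat) (S : set 'rV[R]_n)
  (p : 'rV[R]_n -> 'rV[R]_n) : Prop :=
  forall th, S (p th) /\ forall th', S th' -> norm2 (th - p th) <= norm2 (th - th').

(* alt_C PM PC th1 k = Theta^C_{k+1}; Theta^M_{k+1} = PM (alt_C PM PC th1 k). *)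
Fixpoint alt_C (T : Type) (PM PC : T -> T) (th1 : T) (k : nat) : T :=
  match k with
  | 0 => th1
  | k'.+1 => PC (PM (alt_C PM PC th1 k'))
  end.

From mathcomp Require Import all_boot all_order all_algebra.
From mathcomp Require Import all_classical all_reals all_analysis.
Set Implicit Arguments. Unset Strict Implicit. Unset Printing Implicit Defensive.
Import Order.TTheory GRing.Theory Num.Theory numFieldNormedType.Exports.
Local Open Scope classical_set_scope.
Local Open Scope ring_scope.

(* Write c_k for the k-th iterate in C and m_k := P_M c_k.  Since m_k lies in
   M, the gap |c_(k+1) - m_(k+1)| is at most |c_(k+1) - m_k|; since c_k lies in
   C, that is at most |m_k - c_k|.  So from the second term on the gaps form a
   nonincreasing sequence of nonnegative reals, which converges. *)

Lemma norm2_ge0 (R : realType) (n : nat) (v : 'rV[R]_n) : 0 <= norm2 v.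
Proof. exact: sqrtr_ge0. Qed.

Lemma norm2_distC (R : realType) (n : nat) (a b : 'rV[R]_n) :
  norm2 (a - b) = norm2 (b - a).
Proof.
rewrite /norm2; congr Num.sqrt; apply: eq_bigr => j _.
by rewrite !mxE -sqrrN opprB.
Qed.

Section ProjectionTheory.
Variables (R : realType) (n : nat) (S : set 'rV[R]_n) (p : 'rV[R]_n -> 'rV[R]_n).
Hypothesis pS : is_projection S p.

Lemma projection_mem x : S (p x).
Proof. by case: (pS x). Qed.

Lemma projection_dist_min x y : S y -> norm2 (x - p x) <= norm2 (x - y).
Proof. by case: (pS x) => _; apply. Qed.

End ProjectionTheory.

Section AlternatingProjections.
Variables (R : realType) (n : nat) (A B : set 'rV[R]_n).
Variables (PA PB : 'rV[R]_n -> 'rV[R]_n).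
Hypotheses (PA_proj : is_projection A PA) (PB_proj : is_projection B PB).

Let gap (th : 'rV[R]_n) k := norm2 (alt_C PA PB th k - PA (alt_C PA PB th k)).

Lemma alt_gap_nonincreasing th : nonincreasing_seq (fun k => gap th k.+1).
Proof.
apply/nonincreasing_seqP => k; rewrite /gap /=.
set c := PB (PA (alt_C PA PB th k)).
have Bc : B c by exact: projection_mem PB_proj _.
apply: (le_trans (projection_dist_min PA_proj _ (projection_mem PA_proj c))).
rewrite norm2_distC [leRHS]norm2_distC.
exact: projection_dist_min PB_proj _ _ Bc.
Qed.

(* The initial point need not lie in B, so monotonicity only holds after the
   first step. *)
Lemma alt_gap_cvgn th : cvgn (gap th).
Proof.
have gap_lb : has_lbound (range (fun k => gap th k.+1)).
  by exists 0 => _ [k _ <-]; exact: norm2_ge0.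
have gap_cvg := nonincreasing_is_cvgn (alt_gap_nonincreasing th) gap_lb.
by apply/cvg_ex; exists (limn (fun k => gap th k.+1)); rewrite -cvg_shiftS.
Qed.

End AlternatingProjections.

Theorem proposition1 (R : realType) (n M : nat)
  (N : 'rV[R]_n -> 'rV[R]_M) (d : 'rV[R]_M) (P delta : R)
  (L : 'rV[R]_n -> R) (PM PC : 'rV[R]_n -> 'rV[R]_n) (th1 : 'rV[R]_n) :
  0 <= P <= 1 -> 0 <= delta ->
  local_minima L !=set0 ->
  completion_set N d P delta !=set0 ->
  is_projection (local_minima L) PM ->
  is_projection (completion_set N d P delta) PC ->
  cvgn (fun k => norm2 (alt_C PM PC th1 k - PM (alt_C PM PC th1 k))).
Proof. by move=> _ _ _ _ PM_proj PC_proj; exact: alt_gap_cvgn PM_proj PC_proj th1. Qed.
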